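(* Let $A$ be an associative (not necessarily unital) algebra over a field $F$, let $n\ge 1$, $\sigma\in S_n$, and $q\in F$ with $q\neq 1$. If $A$ satisfies the identity $x_1\cdots x_n=q\,x_{\sigma(1)}\cdots x_{\sigma(n)}$, then $A$ is nilpotent, i.e. there is $m$ such that $a_1\cdots a_m=0$ for all $a_1,\dots,a_m\in A$.
   Context: $A$ satisfies the identity $x_1\cdots x_n=q\,x_{\sigma(1)}\cdots x_{\sigma(n)}$ means $a_1\cdots a_n=q\,a_{\sigma(1)}\cdots a_{\sigma(n)}$ for all $a_1,\dots,a_n\in A$. *)

From HB Require Import structures.
From mathcomp Require Import all_boot all_order all_algebra all_fingroup.
Set Implicit Arguments. Unset Strict Implicit. Unset Printing Implicit Defensive.
Import GRing.Theory.
Local Open Scope ring_scope.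

(* A (not necessarily unital) associative F-algebra is given as an
   F-vector space A (lmodType F) together with a bilinear associative
   multiplication mul : A -> A -> A. *)
Definition bilinear_mul (F : fieldType) (A : lmodType F) (mul : A -> A -> A) :=
  (forall (c : F) (x y z : A), mul (c *: x + y) z = c *: mul x z + mul y z) /\
  (forall (c : F) (x y z : A), mul z (c *: x + y) = c *: mul z x + mul z y).

Definition assoc_mul (A : Type) (mul : A -> A -> A) :=
  forall x y z, mul x (mul y z) = mul (mul x y) z.

(* Product x_1 (x_2 (... x_k)) of a nonempty list; the empty product is
   (by convention, never used for nonempty lists) 0. *)
Fixpoint nprod (F : fieldType) (A : lmodType F) (mul : A -> A -> A) (s : seq A) : A :=
  match s with
  | [::] => 0
  | [:: x] => x
  | x :: s' => mul x (nprod mul s')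
  end.

Definition alg_prod (F : fieldType) (A : lmodType F) (mul : A -> A -> A) (k : nat)
  (a : 'I_k -> A) : A := nprod mul [seq a i | i <- enum 'I_k].

(* Count the positions ("gaps") at which an extra factor z can be inserted into a
   product of n factors.  Merging z into the factor on its right, resp. on its left,
   and applying the identity shows that, up to q, gap k of the product corresponds to
   two gaps of the permuted product; when sigma is not the identity these differ for
   some k, so for q != 0 inserting z at some gap lo gives the same product as
   inserting it at a later gap hi.  Thus, between a long enough prefix and suffix,
   z commutes with every product Y of hi - lo factors.  In a product
   X b_1 ... b_n S of such blocks the b_i can then be permuted freely, and the
   identity turns it into q times itself, hence into 0.  The cases q = 0 and
   sigma = 1 are immediate. *)

From HB Require Import structures.
From mathcomp Require Import all_boot all_order all_algebra all_fingroup.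
From mathcomp Require Import zify.
Import GRing.Theory.
Local Open Scope ring_scope.
Set Implicit Arguments. Unset Strict Implicit.

Definition insert_at (T : Type) (k : nat) (z : T) (s : seq T) : seq T :=
  take k s ++ z :: drop k s.

Lemma insert_at_cat (T : Type) (u v : seq T) z :
  insert_at (size u) z (u ++ v) = u ++ z :: v.
Proof. by rewrite /insert_at take_size_cat ?drop_size_cat. Qed.

Lemma scale_fixed_eq0 (F : fieldType) (V : lmodType F) (q : F) (v : V) :
  q != 1 -> v = q *: v -> v = 0.
Proof.
move=> q_neq1 v_fixed; have q1_neq0 : 1 - q != 0 by rewrite subr_eq0 eq_sym.
by apply: (scalerI q1_neq0); rewrite scalerBl scale1r -v_fixed subrr scaler0.
Qed.

Section Products.

Variables (F : fieldType) (A : lmodType F) (mul : A -> A -> A).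

Lemma nprod_cons x s : s != [::] -> nprod mul (x :: s) = mul x (nprod mul s).
Proof. by case: s. Qed.

Hypothesis mulA : assoc_mul mul.

Lemma nprod_cat s1 s2 : s1 != [::] -> s2 != [::] ->
  nprod mul (s1 ++ s2) = mul (nprod mul s1) (nprod mul s2).
Proof.
elim: s1 => [//|x [|y s1] IHs] _ s2_nonempty; first by rewrite cat1s nprod_cons.
by rewrite cat_cons nprod_cons // IHs // mulA -nprod_cons.
Qed.

Lemma nprod_cat_congr u s s' v : s != [::] -> s' != [::] ->
  nprod mul s = nprod mul s' -> nprod mul (u ++ s ++ v) = nprod mul (u ++ s' ++ v).
Proof.
case: s s' => [//|a s] [//|a' s'] _ _ eq_s.
have eq_sv : nprod mul (a :: s ++ v) = nprod mul (a' :: s' ++ v).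
  by case: v => [|y v]; rewrite ?cats0 // -!cat_cons !nprod_cat ?eq_s.
by case: u => [//|x u]; rewrite !(nprod_cat (s1 := x :: u)) ?eq_sv.
Qed.

Lemma nprod_set_nth_mull t m z : (m < size t)%N ->
  nprod mul (set_nth 0 t m (mul z t`_m)) = nprod mul (insert_at m z t).
Proof.
move=> lt_m_t; rewrite set_nthE lt_m_t /insert_at (drop_nth 0 lt_m_t).
exact: (nprod_cat_congr (take m t) (s := [:: mul z t`_m]) (s' := [:: z; t`_m])).
Qed.

Lemma nprod_set_nth_mulr t m z : (m < size t)%N ->
  nprod mul (set_nth 0 t m (mul t`_m z)) = nprod mul (insert_at m.+1 z t).
Proof.
move=> lt_m_t; rewrite set_nthE lt_m_t /insert_at (take_nth 0 lt_m_t) cat_rcons.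
exact: (nprod_cat_congr (take m t) (s := [:: mul t`_m z]) (s' := [:: t`_m; z])).
Qed.

Definition prod_atleast (c : nat) (x : A) :=
  exists2 s : seq A, (c <= size s)%N & nprod mul s = x.

Lemma prod_atleast_mull c x y :
  (0 < c)%N -> prod_atleast c x -> prod_atleast c (mul x y).
Proof.
move=> c_gt0 [s le_c_s <-]; exists (rcons s y); first by rewrite size_rcons leqW.
by rewrite -cats1 nprod_cat // -size_eq0 -lt0n (leq_trans c_gt0).
Qed.

Lemma prod_atleast_mulr c x y :
  (0 < c)%N -> prod_atleast c y -> prod_atleast c (mul x y).
Proof.
move=> c_gt0 [s le_c_s <-]; exists (x :: s); first exact: leqW.
by rewrite nprod_cons // -size_eq0 -lt0n (leq_trans c_gt0).
Qed.

Lemma prod_atleast_foldr c S s :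
  (0 < c)%N -> prod_atleast c S -> prod_atleast c (foldr mul S s).
Proof. by move=> c_gt0 cS; elim: s => //= x s; apply: prod_atleast_mulr. Qed.

Lemma prod_atleast_exact c x : (0 < c)%N -> prod_atleast c x ->
  exists2 s : seq A, size s = c & nprod mul s = x.
Proof.
case: c => [//|c] _ [s le_c_s <-].
exists (take c s ++ [:: nprod mul (drop c s)]).
  by rewrite size_cat size_take /=; case: ltnP; lia.
rewrite -[in RHS](cat_take_drop c s) -[in RHS](cats0 (drop c s)).
apply: (@nprod_cat_congr _ [:: _] _ [::]) => //.
by rewrite -size_eq0 size_drop subn_eq0 -ltnNge.
Qed.

Lemma nprod_flatten ss : ss != [::] -> all (fun s => s != [::]) ss ->
  nprod mul (flatten ss) = nprod mul (map (nprod mul) ss).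
Proof.
elim: ss => [//|s [|s' ss] IHss] _ /andP[s_nonempty ss_nonempty].
  by rewrite /= cats0.
by rewrite /= nprod_cat ?IHss //; case: s' ss_nonempty {IHss}.
Qed.

Lemma foldr_mul_nprod S s : s != [::] -> foldr mul S s = mul (nprod mul s) S.
Proof.
elim: s => [//|x [|y s] IHs] _ //.
by transitivity (mul x (foldr mul S (y :: s))); rewrite // IHs // nprod_cons.
Qed.

Lemma nprod_reshape k c s : (0 < k)%N -> (0 < c)%N -> size s = (k * c)%N ->
  exists bs, [/\ size bs = k, {in bs, forall b, prod_atleast c b} &
    nprod mul s = nprod mul bs].
Proof.
move=> k_gt0 c_gt0 size_s; set blocks := reshape (nseq k c) s.
have sumn_shape : sumn (nseq k c) = size s by rewrite sumn_nseq size_s mulnC.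
have size_blocks bl : bl \in blocks -> size bl = c.
  move=> /(map_f size); rewrite -/(shape _) reshapeKl ?sumn_shape //.
  by rewrite mem_nseq => /andP[_ /eqP].
have blocks_nonempty : all (fun bl => bl != [::]) blocks.
  by apply/allP => bl /size_blocks size_bl; rewrite -size_eq0 size_bl -lt0n.
have size_blocks_k : size blocks = k by rewrite size_reshape size_nseq.
exists (map (nprod mul) blocks); split; first by rewrite size_map.
  by move=> _ /mapP[bl /size_blocks size_bl ->]; exists bl; rewrite ?size_bl.
by rewrite -nprod_flatten ?reshapeKr ?sumn_shape // -size_eq0 size_blocks_k -lt0n.
Qed.

Lemma nprod_blocks c1 c2 c3 k s :
  (0 < c1)%N -> (0 < c2)%N -> (0 < c3)%N -> (0 < k)%N -> size s = (c1 + k * c2 + c3)%N ->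
  exists X bs S, [/\ prod_atleast c1 X, prod_atleast c3 S, size bs = k,
    {in bs, forall b, prod_atleast c2 b} & nprod mul s = mul X (foldr mul S bs)].
Proof.
move=> c1_gt0 c2_gt0 c3_gt0 k_gt0 size_s.
set L1 := take c1 s; set L2 := take (k * c2) (drop c1 s).
set L3 := drop (k * c2) (drop c1 s).
have size_L1 : size L1 = c1 by rewrite size_takel // size_s; lia.
have size_L2 : size L2 = (k * c2)%N by rewrite size_takel // size_drop size_s; lia.
have size_L3 : size L3 = c3 by rewrite !size_drop size_s; lia.
have [bs [size_bs c2bs nprod_L2]] := nprod_reshape k_gt0 c2_gt0 size_L2.
exists (nprod mul L1), bs, (nprod mul L3); split=> //.
- by exists L1; rewrite ?size_L1.
- by exists L3; rewrite ?size_L3.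
have L1_nonempty : L1 != [::] by rewrite -size_eq0 size_L1 -lt0n.
have L2_nonempty : L2 != [::] by rewrite -size_eq0 size_L2 -lt0n muln_gt0 k_gt0 c2_gt0.
have L3_nonempty : L3 != [::] by rewrite -size_eq0 size_L3 -lt0n.
have L23_nonempty : L2 ++ L3 != [::].
  by rewrite -size_eq0 size_cat size_L3 addn_eq0 negb_and -!lt0n c3_gt0 orbT.
have bs_nonempty : bs != [::] by rewrite -size_eq0 size_bs -lt0n.
rewrite foldr_mul_nprod // -nprod_L2.
by rewrite -{1}(cat_take_drop c1 s) -(cat_take_drop (k * c2) (drop c1 s)) !nprod_cat.
Qed.

Section InsertionContext.

Variables (N lo hi : nat).
Hypotheses (lt_lo_hi : (lo < hi)%N) (le_hi_N : (hi <= N)%N).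
Hypothesis nprod_insert_lo_hi :
  forall t z, size t = N -> nprod mul (insert_at lo z t) = nprod mul (insert_at hi z t).

(* [X] and [S] carry one factor more than the insertion identity needs, so that the
   prefix and suffix around it are never empty. *)
Lemma mul_swap_in_context X Y S z :
  prod_atleast lo.+1 X -> prod_atleast (hi - lo) Y -> prod_atleast (N - hi).+1 S ->
  mul X (mul z (mul Y S)) = mul X (mul Y (mul z S)).
Proof.
case/prod_atleast_exact=> // -[//|x Xs] [size_Xs] <-.
case/prod_atleast_exact=> [|Ys size_Ys <-]; first by rewrite subn_gt0.
case/prod_atleast_exact=> // + + <-; case/lastP=> [//|Ss s].
rewrite size_rcons => -[size_Ss].
have Ys_nonempty : Ys != [::] by rewrite -size_eq0 size_Ys subn_eq0 -ltnNge.
have size_t : size (Xs ++ Ys ++ Ss) = N by rewrite !size_cat size_Xs size_Ys size_Ss; lia.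
have hi_XYs : hi = size (Xs ++ Ys) by rewrite size_cat size_Xs size_Ys; lia.
have := nprod_insert_lo_hi z size_t.
rewrite -size_Xs insert_at_cat catA hi_XYs insert_at_cat -!catA => eq_insert.
have Ss_nonempty : rcons Ss s != [::] by rewrite -size_eq0 size_rcons.
have -> : mul z (mul (nprod mul Ys) (nprod mul (rcons Ss s))) =
    nprod mul (z :: Ys ++ rcons Ss s).
  by rewrite nprod_cons ?nprod_cat // -size_eq0 size_cat size_rcons addnS.
have -> : mul (nprod mul Ys) (mul z (nprod mul (rcons Ss s))) =
    nprod mul (Ys ++ z :: rcons Ss s) by rewrite nprod_cat ?nprod_cons.
rewrite -!nprod_cat // -?size_eq0 ?size_cat ?addnS //.
have -> : (x :: Xs) ++ z :: Ys ++ rcons Ss s = [:: x] ++ (Xs ++ z :: Ys ++ Ss) ++ [:: s].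
  by rewrite -cats1 /= -!catA /= -catA.
have -> : (x :: Xs) ++ Ys ++ z :: rcons Ss s = [:: x] ++ (Xs ++ Ys ++ z :: Ss) ++ [:: s].
  by rewrite -cats1 /= -!catA.
by apply: nprod_cat_congr eq_insert; rewrite -size_eq0 !size_cat /= ?addnS.
Qed.

End InsertionContext.

Section ContextPermutation.

Variables (c1 c2 c3 : nat).
Hypotheses (c1_gt0 : (0 < c1)%N) (c3_gt0 : (0 < c3)%N).
Hypothesis mul_swap : forall X Y S z,
  prod_atleast c1 X -> prod_atleast c2 Y -> prod_atleast c3 S ->
  mul X (mul z (mul Y S)) = mul X (mul Y (mul z S)).

Lemma mul_foldr_swap X S z ys :
  prod_atleast c1 X -> prod_atleast c3 S -> {in ys, forall y, prod_atleast c2 y} ->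
  mul X (foldr mul (mul z S) ys) = mul X (mul z (foldr mul S ys)).
Proof.
elim: ys X => [//|y ys IHys] X c1X c3S c2ys /=.
have c2y : prod_atleast c2 y by apply: c2ys; rewrite mem_head.
have c2ys' : {in ys, forall w, prod_atleast c2 w}.
  by move=> w w_ys; apply: c2ys; rewrite in_cons w_ys orbT.
have c1Xy : prod_atleast c1 (mul X y) by exact: prod_atleast_mull.
rewrite mulA IHys // -mulA.
by rewrite [RHS]mul_swap //; apply: prod_atleast_foldr.
Qed.

Lemma mul_foldr_perm X S ys ys' :
  prod_atleast c1 X -> prod_atleast c3 S -> {in ys, forall y, prod_atleast c2 y} ->
  perm_eq ys ys' -> mul X (foldr mul S ys) = mul X (foldr mul S ys').
Proof.
elim: ys X ys' => [|y ys IHys] X ys' c1X c3S c2ys perm_ys.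
  by move: perm_ys; rewrite perm_sym => /perm_nilP ->.
have y_ys' : y \in ys' by rewrite -(perm_mem perm_ys) mem_head.
case/splitPr: y_ys' perm_ys => p1 p2 perm_ys.
have c2ys' : {in p1 ++ y :: p2, forall w, prod_atleast c2 w}.
  by move=> w; rewrite -(perm_mem perm_ys); apply: c2ys.
have c2p1 : {in p1, forall w, prod_atleast c2 w}.
  by move=> w w_p1; apply: c2ys'; rewrite mem_cat w_p1.
have c3p2 : prod_atleast c3 (foldr mul S p2) by exact: prod_atleast_foldr.
rewrite foldr_cat /= mul_foldr_swap // -foldr_cat !mulA; apply: IHys => //.
- by apply: prod_atleast_mull.
- by move=> w w_ys; apply: c2ys; rewrite in_cons w_ys orbT.
- by rewrite -(perm_cons y) (perm_trans perm_ys) // (perm_catCA p1 [:: y] p2).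
Qed.

End ContextPermutation.

Hypothesis mul_bilinear : bilinear_mul mul.

Lemma mul_scaler c x z : mul z (c *: x) = c *: mul z x.
Proof.
have [_ mulD] := mul_bilinear.
have mulx0 : mul z 0 = 0.
  have E := mulD 1 0 0 z; rewrite !scale1r addr0 in E.
  by apply: (@addrI _ (mul z 0)); rewrite addr0 -E.
by rewrite -[c *: x]addr0 mulD mulx0 addr0.
Qed.

Lemma mul_scalel c x z : mul (c *: x) z = c *: mul x z.
Proof.
have [mulD _] := mul_bilinear.
have mul0x : mul 0 z = 0.
  have E := mulD 1 0 0 z; rewrite !scale1r addr0 in E.
  by apply: (@addrI _ (mul 0 z)); rewrite addr0 -E.
by rewrite -[c *: x]addr0 mulD mul0x addr0.
Qed.

Definition permute n (sigma : 'S_n) (s : seq A) : seq A :=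
  [seq s`_(sigma i) | i <- enum 'I_n].

Lemma size_permute n (sigma : 'S_n) s : size (permute sigma s) = n.
Proof. by rewrite size_map size_enum_ord. Qed.

Lemma map_nth_enum_ord n (s : seq A) :
  size s = n -> [seq s`_i | i : 'I_n <- enum 'I_n] = s.
Proof.
move=> <-; rewrite -[RHS](mkseq_nth 0) /mkseq -val_enum_ord -map_comp.
exact: eq_map.
Qed.

Lemma perm_eq_permute n (sigma : 'S_n) s : size s = n -> perm_eq s (permute sigma s).
Proof.
move=> size_s; rewrite -[s in perm_eq s](map_nth_enum_ord size_s) /permute.
rewrite (map_comp (fun i : 'I_n => s`_i) sigma); apply: perm_map.
apply: uniq_perm; rewrite ?enum_uniq ?(map_inj_uniq perm_inj) ?enum_uniq // => i.
by rewrite mem_enum; apply/esym/mapP; exists ((sigma^-1)%g i); rewrite ?mem_enum ?permKV.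
Qed.

Lemma permute1 n (s : seq A) : size s = n -> permute (1%g : 'S_n) s = s.
Proof.
move=> size_s; rewrite -[RHS](map_nth_enum_ord size_s).
by apply: eq_map => i; rewrite perm1.
Qed.

Lemma nth_permute n (sigma : 'S_n.+1) s j :
  (j < n.+1)%N -> (permute sigma s)`_j = s`_(sigma (inord j)).
Proof.
move=> lt_j; rewrite (nth_map ord0) ?size_enum_ord //.
by congr (s`_(val (sigma _))); apply: ord_inj; rewrite nth_enum_ord ?inordK.
Qed.

Lemma permuteK n (sigma : 'S_n.+1) t :
  size t = n.+1 -> permute sigma (permute (sigma^-1)%g t) = t.
Proof.
move=> size_t; apply: (@eq_from_nth _ 0); rewrite size_permute // => j lt_j.
by rewrite !nth_permute ?ltn_ord // inord_val permK inordK.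
Qed.

Lemma permute_set_nth n (sigma : 'S_n.+1) s (i : 'I_n.+1) y : size s = n.+1 ->
  permute sigma (set_nth 0 s i y) = set_nth 0 (permute sigma s) ((sigma^-1)%g i) y.
Proof.
move=> size_s; apply: (@eq_from_nth _ 0).
  by rewrite size_set_nth !size_permute; apply/esym/maxn_idPr.
rewrite size_permute => j lt_j; rewrite nth_permute // !nth_set_nth /= nth_permute //.
congr (if _ then _ else _); apply/eqP/eqP => [/ord_inj <-|->].
  by rewrite permK inordK.
by rewrite inord_val permKV.
Qed.

Section PermutationIdentity.

Variables (n : nat) (sigma : 'S_n.+1) (q : F).
Hypothesis nprod_permute :
  forall s, size s = n.+1 -> nprod mul s = q *: nprod mul (permute sigma s).

Lemma nprod_set_nth_permute s (i : 'I_n.+1) y : size s = n.+1 ->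
  nprod mul (set_nth 0 s i y) =
  q *: nprod mul (set_nth 0 (permute sigma s) ((sigma^-1)%g i) y).
Proof.
move=> size_s; rewrite nprod_permute ?permute_set_nth //.
by rewrite size_set_nth size_s; apply/maxn_idPr.
Qed.

Lemma nth_permute_inv s (i : 'I_n.+1) : (permute sigma s)`_((sigma^-1)%g i) = s`_i.
Proof. by rewrite nth_permute // inord_val permKV. Qed.

Lemma nprod_insert_at_permute s (i : 'I_n.+1) z : size s = n.+1 ->
  nprod mul (insert_at i z s) =
  q *: nprod mul (insert_at ((sigma^-1)%g i) z (permute sigma s)).
Proof.
move=> size_s; rewrite -nprod_set_nth_mull ?size_s // nprod_set_nth_permute //.
by rewrite -nth_permute_inv nprod_set_nth_mull ?size_permute.
Qed.

Lemma nprod_insert_atS_permute s (i : 'I_n.+1) z : size s = n.+1 ->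
  nprod mul (insert_at i.+1 z s) =
  q *: nprod mul (insert_at ((sigma^-1)%g i).+1 z (permute sigma s)).
Proof.
move=> size_s; rewrite -nprod_set_nth_mulr ?size_s // nprod_set_nth_permute //.
by rewrite -nth_permute_inv nprod_set_nth_mulr ?size_permute.
Qed.

(* Gap [m] of a product of [n.+1] factors lies just before factor [m] (counting from
   0).  Up to the scalar [q], the identity moves it to gap [sigma^-1 m] when [z] is
   merged into factor [m], and to gap [gap_shift m] when [z] is merged into factor
   [m - 1] (or, for [m = 0], pulled out on the left). *)
Definition gap_shift (m : nat) : nat :=
  if m is k.+1 then ((sigma^-1)%g (inord k)).+1 else 0.

Lemma gap_shift_le m : (gap_shift m <= n.+1)%N.
Proof. by case: m => //= k; apply: ltn_ord. Qed.

Lemma nprod_insert_at_gap_shift s m z : (m <= n.+1)%N -> size s = n.+1 ->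
  nprod mul (insert_at m z s) =
  q *: nprod mul (insert_at (gap_shift m) z (permute sigma s)).
Proof.
case: m => [_|k lt_k] size_s; last first.
  by rewrite -[in LHS](inordK lt_k) nprod_insert_atS_permute.
have s_nonempty : s != [::] by rewrite -size_eq0 size_s.
have perm_s_nonempty : permute sigma s != [::] by rewrite -size_eq0 size_permute.
by rewrite /insert_at !take0 !drop0 !cat0s !nprod_cons // nprod_permute // mul_scaler.
Qed.

Section NonzeroScalar.

Hypothesis q_neq0 : q != 0.

Lemma nprod_insert_at_gap_images t (i : 'I_n.+1) z : size t = n.+1 ->
  nprod mul (insert_at ((sigma^-1)%g i) z t) = nprod mul (insert_at (gap_shift i) z t).
Proof.
move=> size_t; rewrite -(permuteK sigma size_t); apply: (scalerI q_neq0).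
have size_perm_t : size (permute (sigma^-1)%g t) = n.+1 by rewrite size_permute.
by rewrite -nprod_insert_at_permute // -nprod_insert_at_gap_shift // ltnW.
Qed.

Lemma gap_images_differ : sigma != 1%g ->
  exists i : 'I_n.+1, (sigma^-1)%g i != gap_shift i :> nat.
Proof.
move=> sigma_neq1; apply/existsP; apply: contraR sigma_neq1.
rewrite negb_exists => /forallP /= same_image.
have sigmaV_id k : (k < n.+1)%N -> (sigma^-1)%g (inord k) = k :> nat.
  elim: k => [|k IHk] lt_k.
    by have := same_image (inord 0); rewrite negbK inordK // => /eqP.
  have := same_image (inord k.+1); rewrite negbK inordK // => /eqP ->.
  by rewrite /= IHk // ltnW.
rewrite -invg_eq1; apply/eqP/permP => i; apply: ord_inj; rewrite perm1.
by have := sigmaV_id i (ltn_ord i); rewrite inord_val.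
Qed.

Lemma exists_equal_insertions : sigma != 1%g ->
  exists lo hi, [/\ (lo < hi)%N, (hi <= n.+1)%N & forall t z, size t = n.+1 ->
    nprod mul (insert_at lo z t) = nprod mul (insert_at hi z t)].
Proof.
case/gap_images_differ=> i neq_images.
have eq_ins t z : size t = n.+1 -> nprod mul (insert_at ((sigma^-1)%g i) z t) =
    nprod mul (insert_at (gap_shift i) z t) by exact: nprod_insert_at_gap_images.
have le_a : ((sigma^-1)%g i <= n.+1)%N := ltnW (ltn_ord _).
have le_b := gap_shift_le i.
case: ltngtP neq_images => // [lt_ab|lt_ba] _.
  by exists ((sigma^-1)%g i), (gap_shift i).
by exists (gap_shift i), ((sigma^-1)%g i); split=> // t z /eq_ins ->.
Qed.

End NonzeroScalar.

Lemma nprod_permute_nilpotent : q != 1 ->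
  exists2 m, (0 < m)%N & forall s, size s = m -> nprod mul s = 0.
Proof.
move=> q_neq1; have [q0 | q_neq0] := eqVneq q 0.
  by exists n.+1 => // s /nprod_permute ->; rewrite q0 scale0r.
have [sigma1 | sigma_neq1] := eqVneq sigma 1%g.
  exists n.+1 => // s size_s; apply: (scale_fixed_eq0 q_neq1).
  by rewrite {1}nprod_permute // sigma1 permute1.
have [lo [hi [lt_lo_hi le_hi eq_ins]]] := exists_equal_insertions q_neq0 sigma_neq1.
have mul_swap := mul_swap_in_context lt_lo_hi le_hi eq_ins.
exists (lo.+1 + n.+1 * (hi - lo) + (n.+1 - hi).+1)%N => // s size_s.
have [||||X [bs [S [c1X c3S size_bs c2bs ->]]]] := nprod_blocks _ _ _ _ size_s => //.
  by rewrite subn_gt0.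
apply: (scale_fixed_eq0 q_neq1).
have bs_nonempty : bs != [::] by rewrite -size_eq0 size_bs.
have perm_bs_nonempty : permute sigma bs != [::] by rewrite -size_eq0 size_permute.
have perm_bs := perm_eq_permute sigma size_bs.
rewrite [in RHS](mul_foldr_perm _ _ mul_swap c1X c3S c2bs perm_bs) //.
by rewrite !foldr_mul_nprod // -mul_scaler -mul_scalel -nprod_permute.
Qed.

End PermutationIdentity.

End Products.

Unset Implicit Arguments. Set Strict Implicit.

Theorem theorem4p4 (F : fieldType) (A : lmodType F) (mul : A -> A -> A)
  (Hbil : bilinear_mul mul) (Hassoc : assoc_mul mul)
  (n : nat) (Hn : (0 < n)%N) (sigma : 'S_n) (q : F) (Hq : q != 1)
  (Hid : forall a : 'I_n -> A,
      alg_prod mul a = q *: alg_prod mul (fun i => a (sigma i))) :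
  exists m : nat, (0 < m)%N /\ forall a : 'I_m -> A, alg_prod mul a = 0.
Proof.
case: n Hn sigma Hid => [//|n] _ sigma Hid.
have nprod_permute s : size s = n.+1 -> nprod mul s = q *: nprod mul (permute sigma s).
  by move=> size_s; have := Hid (fun i => s`_i); rewrite /alg_prod map_nth_enum_ord.
have [m m_gt0 nprod_eq0] := nprod_permute_nilpotent Hassoc Hbil nprod_permute Hq.
by exists m; split=> // a; apply: nprod_eq0; rewrite size_map size_enum_ord.
Qed.
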